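(* For every rooted realizable chirotope $(\chi,u)$, there exists $\varepsilon>0$ such that for every $\delta>0$ there exists a right-$(\delta,\varepsilon)$-squeezing of $(\chi,u)$.
   Context: A chirotope on a finite set $E$ is a map $\chi$ from ordered triples of distinct elements of $E$ to $\{-1,1\}$ satisfying the usual alternating symmetry and the interiority and transitivity axioms. It is realizable if there exist points $\mathfrak p_e\in\mathbb R^2$ ($e\in E$), no three collinear, such that $\chi(x,y,z)=1$ iff $\mathfrak p_x,\mathfrak p_y,\mathfrak p_z$ are in counterclockwise order (a realization of $\chi$). A rooted chirotope is a pair $(\chi,u)$ with $u$ an extreme element of $\chi$ (a convex hull vertex: there is $y\neq u$ with $\chi(u,y,z)$ constant over all other $z$); $u^+$ (resp. $u^-$) is the successor (resp. predecessor) of $u$ in counterclockwise order on the convex hull, i.e. the element $y$ with $\chi(u,y,z)=1$ (resp. $\chi(y,u,z)=1$) for all $z\notin\{u,y\}$. A right-$(\delta,\varepsilon)$-squeezing of a rooted chirotope $(\chi,u)$ is a realization $\mathcal P=\{\mathfrak p_e\}$ of $\chi$ such that $\mathfrak p_u=(0,1)$, $\mathfrak p_{u^+}=(0,0)$, $\mathfrak p_{u^-}=(1,0)$, $\mathcal P\setminus\{\mathfrak p_u,\mathfrak p_{u^+}\}\subseteq[\varepsilon,1]\times[-\delta,\delta]$, and every line through two points of $\mathcal P\setminus\{\mathfrak p_u\}$ has slope in $[-\delta,\delta]$. *)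

From HB Require Import structures.
From mathcomp Require Import all_boot all_order all_algebra.
From mathcomp Require Import Rstruct.
Set Implicit Arguments. Unset Strict Implicit. Unset Printing Implicit Defensive.
Import Order.TTheory GRing.Theory Num.Theory.
Local Open Scope ring_scope.

Notation RR := Rdefinitions.R.

Section Chirotopes.
Variable E : finType.

Definition chirotope_axioms (chi : E -> E -> E -> int) : Prop :=
  (forall x y z, uniq [:: x; y; z] -> chi x y z = 1 \/ chi x y z = -1) /\
  (* alternating symmetry (a cyclic shift and a transposition generate S_3) *)
  (forall x y z, uniq [:: x; y; z] ->
      chi y z x = chi x y z /\ chi y x z = - chi x y z) /\
  (forall p q r t, uniq [:: p; q; r; t] ->
      chi t q r = 1 -> chi p t r = 1 -> chi p q t = 1 -> chi p q r = 1) /\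
  (forall t s p q r, uniq [:: t; s; p; q; r] ->
      chi t s p = 1 -> chi t s q = 1 -> chi t s r = 1 ->
      chi t p q = 1 -> chi t q r = 1 -> chi t p r = 1).

(* orientation determinant: positive iff a, b, c are counterclockwise *)
Definition orient (a b c : RR * RR) : RR :=
  (b.1 - a.1) * (c.2 - a.2) - (b.2 - a.2) * (c.1 - a.1).

Definition is_realization (chi : E -> E -> E -> int) (P : E -> RR * RR) : Prop :=
  forall x y z, uniq [:: x; y; z] ->
    orient (P x) (P y) (P z) != 0 /\
    (chi x y z = 1 <-> 0 < orient (P x) (P y) (P z)).

Definition realizable (chi : E -> E -> E -> int) : Prop :=
  exists P : E -> RR * RR, is_realization chi P.

(* u is an extreme element (convex hull vertex) *)
Definition extreme (chi : E -> E -> E -> int) (u : E) : Prop :=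
  exists y, y != u /\ exists c : int,
    forall z, z != u -> z != y -> chi u y z = c.

(* y is u^+ (successor of u on the hull, counterclockwise) *)
Definition is_succ (chi : E -> E -> E -> int) (u y : E) : Prop :=
  y != u /\ forall z, z != u -> z != y -> chi u y z = 1.

(* y is u^- (predecessor of u on the hull) *)
Definition is_pred (chi : E -> E -> E -> int) (u y : E) : Prop :=
  y != u /\ forall z, z != u -> z != y -> chi y u z = 1.

Definition right_squeezing (chi : E -> E -> E -> int) (u : E)
    (delta eps : RR) (P : E -> RR * RR) : Prop :=
  is_realization chi P /\
  P u = (0, 1) /\
  (forall y, is_succ chi u y -> P y = (0, 0)) /\
  (forall y, is_pred chi u y -> P y = (1, 0)) /\
      (forall e, e != u -> ~ is_succ chi u e ->
         (eps <= (P e).1 <= 1) /\ (- delta <= (P e).2 <= delta)) /\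
      (forall x y, x != u -> y != u -> P x != P y ->
         (P x).1 != (P y).1 /\
         `|((P y).2 - (P x).2) / ((P y).1 - (P x).1)| <= delta).

End Chirotopes.

(* Send u^+, u^-, u to (0, 0), (1, 0), (0, 1) by an affine map; every other
   point then lies in the open region x > 0, x + y < 1, so strictly below the
   line y = 1.  The planar homology with centre (0, 1), axis the x-axis and a
   small ratio lam fixes these three points, multiplies every orientation by a
   positive factor, and flattens the rest of the configuration: heights and
   slopes become O(lam), while the abscissae stay above x / (1 + |y|), a bound
   independent of lam.  Taking lam proportional to min(delta, 1) gives the
   squeezing; x <= 1 follows from x + y < 1 and a slope at most 1 towards
   (1, 0).  The hull neighbours u^+, u^- exist because, given one hull edge at
   u, the other one is reached by maximising the angle at u. *)

From HB Require Import structures.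
From mathcomp Require Import all_boot all_order all_algebra.
From mathcomp Require Import Rstruct.
From mathcomp Require Import ring lra.
Import Order.TTheory GRing.Theory Num.Theory.
Set Implicit Arguments. Unset Strict Implicit. Unset Printing Implicit Defensive.
Local Open Scope ring_scope.

Lemma uniq3 (T : eqType) (x y z : T) :
  y != x -> z != x -> z != y -> uniq [:: x; y; z].
Proof. by move=> yx zx zy; rewrite /= !inE negb_or !(eq_sym x) yx zx eq_sym zy. Qed.

Lemma exists_neq2 (T : finType) (x y : T) :
  (2 < #|T|)%N -> exists z, z != x /\ z != y.
Proof.
move=> T3; have : (0 < #|~: [set x; y]|)%N.
  rewrite lt0n; apply/eqP => C0; move: T3.
  by rewrite -(cardsC [set x; y]) C0 addn0 cards2; case: (x != y).
by case/card_gt0P => z; rewrite !inE negb_or => /andP[zx zy]; exists z.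
Qed.

Lemma exists_pos_lbound (R : realDomainType) (T : finType) (P : pred T)
    (f : T -> R) :
  (forall z, P z -> 0 < f z) -> exists2 m, 0 < m <= 1 & forall z, P z -> m <= f z.
Proof.
move=> f_gt0; exists (\big[Order.min/1]_(z | P z) f z); last first.
  by move=> z Pz; apply: bigmin_le_cond.
by rewrite bigmin_le_id andbT; apply/bigmin_gtP.
Qed.

Lemma orient_cycle a b c : orient b c a = orient a b c.
Proof. by rewrite /orient; ring. Qed.

Lemma orient_swap a b c : orient b a c = - orient a b c.
Proof. by rewrite /orient; ring. Qed.

Lemma orient_gt0_antisym a b c : 0 < orient a b c -> ~ 0 < orient b a c.
Proof. by rewrite orient_swap oppr_gt0 => /lt_trans/[apply]; rewrite ltxx. Qed.

Lemma orient_mirror (a b c : RR * RR) :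
  orient (- a.1, a.2) (- b.1, b.2) (- c.1, c.2) = - orient a b c.
Proof. by rewrite /orient /=; ring. Qed.

Section HullEdges.
Variable E : finType.
Implicit Types (p : E -> RR * RR) (chi : E -> E -> E -> int).

Definition general_position p :=
  forall x y z, uniq [:: x; y; z] -> orient (p x) (p y) (p z) != 0.

Definition hull_edge p (v w : E) :=
  forall z, z != v -> z != w -> 0 < orient (p v) (p w) (p z).

Lemma realization_general_position chi p :
  is_realization chi p -> general_position p.
Proof. by move=> Rp x y z xyz; case: (Rp x y z xyz). Qed.

Lemma is_succE chi p u y : is_realization chi p ->
  is_succ chi u y <-> y != u /\ hull_edge p u y.
Proof.
move=> Rp; split=> -[yu Hy]; split=> // z zu zy;
  have [_ Hz] := Rp u y z (uniq3 yu zu zy); apply/Hz; exact: Hy.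
Qed.

Lemma is_predE chi p u y : is_realization chi p ->
  is_pred chi u y <-> y != u /\ hull_edge p y u.
Proof.
move=> Rp; have uniq_yu z : y != u -> z != u -> z != y -> uniq [:: y; u; z].
  by move=> yu zu zy; apply: uniq3; rewrite // eq_sym.
split=> -[yu Hy]; split=> // z.
  by move=> zy zu; have [_ <-] := Rp y u z (uniq_yu z yu zu zy); apply: Hy.
by move=> zu zy; have [_ ->] := Rp y u z (uniq_yu z yu zu zy); apply: Hy.
Qed.

Lemma hull_edge_prev p u y : (2 < #|E|)%N -> general_position p ->
  y != u -> hull_edge p u y -> exists2 w, w != u & hull_edge p w u.
Proof.
move=> E3 gp yu Huy; have [z0 [z0u z0y]] := exists_neq2 u y E3.
pose cross z := orient (p u) (p y) (p z).
pose dot z := ((p y).1 - (p u).1) * ((p z).1 - (p u).1)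
            + ((p y).2 - (p u).2) * ((p z).2 - (p u).2).
have z0P : z0 \in [pred z | (z != u) && (z != y)] by rewrite inE z0u z0y.
(* [w] maximises the angle y u w, i.e. minimises its cotangent dot / cross. *)
case: (arg_minP (fun z => dot z / cross z) z0P) => w /andP[wu wy] w_min.
exists w => // z zw zu; have [->|zy] := eqVneq z y.
  by rewrite -orient_cycle; apply: Huy.
have cross_w : 0 < cross w by apply: Huy.
have cross_z : 0 < cross z by apply: Huy.
pose n := ((p y).1 - (p u).1) ^+ 2 + ((p y).2 - (p u).2) ^+ 2.
have n_gt0 : 0 < n.
  have lagrange : n * (((p z).1 - (p u).1) ^+ 2 + ((p z).2 - (p u).2) ^+ 2)
                  = dot z ^+ 2 + cross z ^+ 2.
    by rewrite /n /dot /cross /orient; ring.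
  rewrite lt_def addr_ge0 ?sqr_ge0 // andbT; apply/eqP => n0.
  move: lagrange; rewrite n0 mul0r; nra.
have key : dot z * cross w - dot w * cross z = n * orient (p w) (p u) (p z).
  by rewrite /dot /cross /n /orient; ring.
have : dot w * cross z <= dot z * cross w.
  have := w_min z; rewrite /= zu zy => /(_ isT).
  by rewrite ler_pdivrMr // mulrAC ler_pdivlMr.
rewrite -subr_ge0 key pmulr_rge0 // le_eqVlt => /orP[/eqP o0|//].
have wuz : uniq [:: w; u; z] by apply: uniq3; rewrite // eq_sym.
by move: (gp w u z wuz); rewrite -o0 eqxx.
Qed.

Lemma hull_edge_next p u y : (2 < #|E|)%N -> general_position p ->
  y != u -> hull_edge p y u -> exists2 w, w != u & hull_edge p u w.
Proof.
move=> E3 gp yu Hyu.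
pose q z := (- (p z).1, (p z).2).
have gq : general_position q.
  by move=> x y' z xyz; rewrite orient_mirror oppr_eq0; apply: gp.
have Huy : hull_edge q u y.
  by move=> z zu zy; rewrite orient_mirror -orient_swap; apply: Hyu.
have [w wu Hwu] := hull_edge_prev E3 gq yu Huy.
exists w => // z zu zw.
by have := Hwu z zw zu; rewrite orient_mirror orient_swap oppr_gt0 oppr_lt0.
Qed.

Lemma exists_hull_neighbours chi p u : (2 < #|E|)%N ->
  is_realization chi p -> extreme chi u ->
  exists a b, is_succ chi u a /\ is_pred chi u b.
Proof.
move=> E3 Rp [y [yu [c Hc]]].
have gp := realization_general_position Rp.
have [c1|c1] := eqVneq c 1.
  have Huy : hull_edge p u y.
    by move=> z zu zy; have [_ <-] := Rp u y z (uniq3 yu zu zy); rewrite Hc.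
  have [w wu Hwu] := hull_edge_prev E3 gp yu Huy.
  by exists y, w; rewrite (is_succE _ _ Rp) (is_predE _ _ Rp).
have Hyu : hull_edge p y u.
  move=> z zy zu; have uyz := uniq3 yu zu zy.
  have [o0 Ho] := Rp u y z uyz; rewrite orient_swap oppr_gt0 lt_neqAle o0 leNgt.
  by apply: contra c1 => /Ho; rewrite Hc // => ->.
have [w wu Hwu] := hull_edge_next E3 gp yu Hyu.
by exists w, y; rewrite (is_succE _ _ Rp) (is_predE _ _ Rp).
Qed.

Lemma succ_unique chi p u a a' : is_realization chi p ->
  is_succ chi u a -> is_succ chi u a' -> a' = a.
Proof.
move=> Rp /(is_succE _ _ Rp)[au Ha] /(is_succE _ _ Rp)[a'u Ha'].
have [//|a'a] := eqVneq a' a; case: (orient_gt0_antisym (Ha a' a'u a'a)).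
by rewrite -orient_cycle; apply: Ha'; rewrite // eq_sym.
Qed.

Lemma pred_unique chi p u b b' : is_realization chi p ->
  is_pred chi u b -> is_pred chi u b' -> b' = b.
Proof.
move=> Rp /(is_predE _ _ Rp)[bu Hb] /(is_predE _ _ Rp)[b'u Hb'].
have [//|b'b] := eqVneq b' b; have bb' : b != b' by rewrite eq_sym.
by case: (orient_gt0_antisym (Hb' b bb' bu)); rewrite orient_cycle; apply: Hb.
Qed.

Lemma succ_neq_pred chi p u a b : (2 < #|E|)%N -> is_realization chi p ->
  is_succ chi u a -> is_pred chi u b -> a != b.
Proof.
move=> E3 Rp /(is_succE _ _ Rp)[au Ha] /(is_predE _ _ Rp)[bu Hb].
apply/eqP => ab; have [z [zu za]] := exists_neq2 u a E3.
by case: (orient_gt0_antisym (Ha z zu za)); rewrite ab; apply: Hb; rewrite -?ab.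
Qed.

End HullEdges.

Lemma realization_rescale (E : finType) (chi : E -> E -> E -> int)
    (p q : E -> RR * RR) :
  is_realization chi p ->
  (forall x y z, uniq [:: x; y; z] -> exists2 k : RR, 0 < k &
     orient (q x) (q y) (q z) = k * orient (p x) (p y) (p z)) ->
  is_realization chi q.
Proof.
move=> Rp Hq x y z xyz; have [k k_gt0 ->] := Hq x y z xyz.
have [o0 Ho] := Rp x y z xyz.
by rewrite pmulr_rgt0 // mulf_eq0 negb_or gt_eqF.
Qed.

(* Affine coordinates of [p] w.r.t. origin [A] and basis [B - A], [C - A],
   computed by Cramer's rule. *)
Definition frame (A B C p : RR * RR) : RR * RR :=
  (orient A p C / orient A B C, orient A B p / orient A B C).

Section Frame.
Variables A B C : RR * RR.
Hypothesis ABC : orient A B C != 0.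

Lemma orient_frame p q r :
  orient (frame A B C p) (frame A B C q) (frame A B C r)
  = (orient A B C)^-1 * orient p q r.
Proof. by move: ABC; rewrite /frame /orient /= => ?; field. Qed.

Lemma frameA : frame A B C A = (0, 0).
Proof. by move: ABC; rewrite /frame /orient => ?; congr (_, _); field. Qed.

Lemma frameB : frame A B C B = (1, 0).
Proof. by move: ABC; rewrite /frame /orient => ?; congr (_, _); field. Qed.

Lemma frameC : frame A B C C = (0, 1).
Proof. by move: ABC; rewrite /frame /orient => ?; congr (_, _); field. Qed.

End Frame.

Lemma exists_normalized_realization (E : finType) (chi : E -> E -> E -> int)
    (p : E -> RR * RR) (u a b : E) :
  is_realization chi p -> is_succ chi u a -> is_pred chi u b -> a != b ->
  exists N : E -> RR * RR,
    [/\ is_realization chi N, N u = (0, 1), N a = (0, 0) & N b = (1, 0)].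
Proof.
move=> Rp Sa Pb ab; have [au Ha] := (is_succE _ _ Rp).1 Sa.
have D_gt0 : 0 < orient (p a) (p b) (p u).
  by rewrite orient_cycle; apply: Ha; [case: Pb | rewrite eq_sym].
have D0 : orient (p a) (p b) (p u) != 0 by rewrite gt_eqF.
exists (frame (p a) (p b) (p u) \o p); split=> /=.
- apply: (realization_rescale Rp) => x y z _.
  by exists (orient (p a) (p b) (p u))^-1; rewrite ?invr_gt0 ?orient_frame.
- exact: frameC.
- exact: frameA.
- exact: frameB.
Qed.

Definition squeeze_den (lam : RR) (p : RR * RR) : RR := 1 - p.2 + lam * p.2.

(* The planar homology with centre (0, 1), axis the x-axis and ratio [lam]:
   each point moves along its line through (0, 1) towards the x-axis. *)
Definition squeeze (lam : RR) (p : RR * RR) : RR * RR :=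
  (p.1 / squeeze_den lam p, lam * p.2 / squeeze_den lam p).

Section Squeeze.
Variable lam : RR.
Hypothesis lam01 : 0 < lam <= 1.

Lemma squeeze_den_gt0 p : p.2 <= 1 -> 0 < squeeze_den lam p.
Proof. by case/andP: lam01; rewrite /squeeze_den; nra. Qed.

Lemma squeeze_den_le p : squeeze_den lam p <= 1 + `|p.2|.
Proof. by case/andP: lam01; rewrite /squeeze_den; case: (ger0P p.2); nra. Qed.

Lemma orient_squeeze p q r : p.2 <= 1 -> q.2 <= 1 -> r.2 <= 1 ->
  orient (squeeze lam p) (squeeze lam q) (squeeze lam r)
  = lam / (squeeze_den lam p * squeeze_den lam q * squeeze_den lam r)
    * orient p q r.
Proof.
move=> /squeeze_den_gt0 + /squeeze_den_gt0 + /squeeze_den_gt0.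
rewrite /squeeze /squeeze_den /orient /= => ? ? ?; field; rewrite !gt_eqF //.
Qed.

Lemma squeeze_x_axis x : squeeze lam (x, 0) = (x, 0).
Proof. by rewrite /squeeze /squeeze_den /= !(subr0, mulr0, addr0, divr1, mul0r). Qed.

Lemma squeeze_apex : squeeze lam (0, 1) = (0, 1).
Proof.
case/andP: lam01 => lam_gt0 _.
by rewrite /squeeze /squeeze_den /= subrr add0r mul0r mulr1 divff ?gt_eqF.
Qed.

Lemma squeeze_x_ge p : p.2 <= 1 -> 0 <= p.1 ->
  p.1 / (1 + `|p.2|) <= (squeeze lam p).1.
Proof.
move=> /squeeze_den_gt0 den_gt0 x_ge0; have den_le := squeeze_den_le p.
by rewrite /= ler_wpM2l // lef_pV2 ?posrE // (lt_le_trans den_gt0 den_le).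
Qed.

Lemma squeeze_y_le d p : p.2 < 1 ->
  lam * (1 + `|p.2|) ^+ 2 <= d * (1 - p.2) -> `|(squeeze lam p).2| <= d.
Proof.
move=> y_lt1 H; have den_gt0 := squeeze_den_gt0 (ltW y_lt1).
have den_ge : 1 - p.2 <= squeeze_den lam p * (1 + `|p.2|).
  by case/andP: lam01; rewrite /squeeze_den; case: (ger0P p.2); nra.
rewrite /= normf_div (gtr0_norm den_gt0) ler_pdivrMr // normrM.
case/andP: lam01 => lam_gt0 _; rewrite (gtr0_norm lam_gt0).
have s_gt0 : 0 < 1 + `|p.2| by rewrite ltr_pwDl.
have d_gt0 : 0 < d.
  have : 0 < lam * (1 + `|p.2|) ^+ 2 by rewrite mulr_gt0 ?exprn_gt0.
  by move/lt_le_trans/(_ H); rewrite pmulr_lgt0 // subr_gt0.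
have : lam * (1 + `|p.2|) <= d * squeeze_den lam p.
  rewrite -(ler_pM2r s_gt0) -mulrA -expr2 -mulrA (le_trans H) //.
  by rewrite ler_pM2l.
lra.
Qed.

Lemma squeeze_slope d p q : p.2 <= 1 -> q.2 <= 1 -> 0 <= d ->
  orient (0, 1) p q != 0 ->
  2 * lam * `|p.1 * q.2 - p.2 * q.1| <= `|orient (0, 1) p q| ->
  2 * lam * `|q.2 - p.2| <= d * `|orient (0, 1) p q| ->
  (squeeze lam p).1 != (squeeze lam q).1 /\
  `|((squeeze lam q).2 - (squeeze lam p).2)
    / ((squeeze lam q).1 - (squeeze lam p).1)| <= d.
Proof.
move=> /squeeze_den_gt0 wp_gt0 /squeeze_den_gt0 wq_gt0 d_ge0 o0.
set o := orient _ p q; set mu := p.1 * q.2 - p.2 * q.1 => mu_small dy_small.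
case/andP: lam01 => lam_gt0 _.
set D := squeeze_den lam p * squeeze_den lam q.
have D0 : D != 0 by rewrite mulf_neq0 ?gt_eqF.
have dX : (squeeze lam q).1 - (squeeze lam p).1 = (o - lam * mu) / D.
  move: wp_gt0 wq_gt0; rewrite /D /o /mu /orient /squeeze /squeeze_den /= => ? ?.
  by field; rewrite !gt_eqF.
have dY : (squeeze lam q).2 - (squeeze lam p).2 = lam * (q.2 - p.2) / D.
  move: wp_gt0 wq_gt0; rewrite /D /squeeze /squeeze_den /= => ? ?.
  by field; rewrite !gt_eqF.
have o_le : `|o| <= 2 * `|o - lam * mu|.
  have := ler_normD (o - lam * mu) (lam * mu).
  by rewrite subrK normrM (gtr0_norm lam_gt0); lra.
have olm0 : o - lam * mu != 0.
  by rewrite -normr_gt0; move: o0; rewrite -normr_gt0; lra.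
split; first by rewrite eq_sym -subr_eq0 dX mulf_neq0 ?invr_eq0.
rewrite dX dY; have -> : (lam * (q.2 - p.2) / D) / ((o - lam * mu) / D)
                       = lam * (q.2 - p.2) / (o - lam * mu).
  by field; rewrite olm0 D0.
rewrite normf_div ler_pdivrMr ?normr_gt0 // normrM (gtr0_norm lam_gt0).
have := ler_wpM2l d_ge0 o_le; lra.
Qed.

End Squeeze.

Lemma x_le1_of_flat_slope (q : RR * RR) : 0 < orient (1, 0) (0, 1) q ->
  `|(q.2 - 0) / (q.1 - 1)| <= 1 -> q.1 <= 1.
Proof.
rewrite /orient /= => o_gt0 slope; rewrite leNgt; apply/negP => q1_gt1.
move: slope; rewrite subr0 normf_div (gtr0_norm (_ : 0 < q.1 - 1)) ?subr_gt0 //.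
rewrite ler_pdivrMr ?subr_gt0 // mul1r => y_le.
have := ler_norm (- q.2); rewrite normrN; lra.
Qed.

Section NormalizedRealization.
Variables (E : finType) (chi : E -> E -> E -> int) (u a b : E).
Variable N : E -> RR * RR.
Hypotheses (RN : is_realization chi N) (Sa : is_succ chi u a)
  (Pb : is_pred chi u b).
Hypotheses (Nu : N u = (0, 1)) (Na : N a = (0, 0)) (Nb : N b = (1, 0)).

Lemma normalized_x_gt0 z : z != u -> z != a -> 0 < (N z).1.
Proof.
have [_ Ha] := (is_succE _ _ RN).1 Sa.
by move=> zu za; have := Ha z zu za; rewrite Nu Na /orient /=; lra.
Qed.

Lemma normalized_below_diag z : z != u -> z != b -> (N z).1 + (N z).2 < 1.
Proof.
have [_ Hb] := (is_predE _ _ RN).1 Pb.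
by move=> zu zb; have := Hb z zb zu; rewrite Nu Nb /orient /=; lra.
Qed.

Lemma normalized_y_lt1 z : z != u -> (N z).2 < 1.
Proof.
move=> zu; have [->|zb] := eqVneq z b; first by rewrite Nb /=; lra.
have [->|za] := eqVneq z a; first by rewrite Na /=; lra.
have := normalized_x_gt0 zu za; have := normalized_below_diag zu zb; lra.
Qed.

Lemma normalized_y_le1 z : (N z).2 <= 1.
Proof.
by have [->|/normalized_y_lt1/ltW //] := eqVneq z u; rewrite Nu.
Qed.

Lemma normalized_general_position x y : x != u -> y != u -> x != y ->
  orient (0, 1) (N x) (N y) != 0.
Proof.
move=> xu yu xy; rewrite -Nu; apply: realization_general_position RN _ _ _ _.
by apply: uniq3; rewrite // eq_sym.
Qed.

(* For [lam = d * m] these are the hypotheses of [squeeze_y_le] and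
   [squeeze_slope] bounding heights and slopes by [d]. *)
Definition squeeze_rate (m : RR) : Prop :=
  (forall z, z != u -> m * (1 + `|(N z).2|) ^+ 2 <= 1 - (N z).2) /\
  (forall x y, x != u -> y != u -> x != y ->
     2 * m * (`|(N x).1 * (N y).2 - (N x).2 * (N y).1| + `|(N y).2 - (N x).2|)
     <= `|orient (0, 1) (N x) (N y)|).

Lemma exists_squeeze_rate : exists2 m : RR, 0 < m <= 1 & squeeze_rate m.
Proof.
pose K x y := `|(N x).1 * (N y).2 - (N x).2 * (N y).1| + `|(N y).2 - (N x).2|.
have [m1 /andP[m1_gt0 m1_le1] Hm1] : exists2 m1, 0 < m1 <= 1 &
    forall z, z != u -> m1 <= (1 - (N z).2) / (1 + `|(N z).2|) ^+ 2.
  apply: exists_pos_lbound => z zu.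
  by rewrite divr_gt0 ?exprn_gt0 ?subr_gt0 ?normalized_y_lt1 ?(ltr_pwDl ltr01).
have [m2 /andP[m2_gt0 m2_le1] Hm2] : exists2 m2, 0 < m2 <= 1 &
    forall xy : E * E, [&& xy.1 != u, xy.2 != u & xy.1 != xy.2] ->
    m2 <= `|orient (0, 1) (N xy.1) (N xy.2)| / (2 * K xy.1 xy.2 + 1).
  apply: exists_pos_lbound => -[x y] /and3P[/= xu yu xy].
  rewrite divr_gt0 ?normr_gt0 ?normalized_general_position //.
  by rewrite ltr_pwDr // mulr_ge0 // addr_ge0.
exists (m1 * m2); first by rewrite mulr_gt0 // mulr_ile1 // ltW.
split=> [z zu | x y xu yu xy].
  have s_gt0 : 0 < (1 + `|(N z).2|) ^+ 2 by rewrite exprn_gt0 ?(ltr_pwDl ltr01).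
  move: (Hm1 z zu); rewrite ler_pdivlMr // => Hz.
  by rewrite -mulrA mulrCA (le_trans _ Hz) // ler_piMl // mulr_ge0 // ltW.
have K_ge0 : 0 <= K x y by rewrite addr_ge0.
move: (Hm2 (x, y)); rewrite /= xu yu xy => /(_ isT).
rewrite ler_pdivlMr ?ltr_pwDr ?mulr_ge0 // -/(K x y) => H.
have : m1 * (m2 * K x y) <= m2 * K x y by rewrite ler_piMl // mulr_ge0 // ltW.
lra.
Qed.

Lemma exists_squeeze_margin : exists2 eps : RR, 0 < eps &
  forall z, z != u -> z != a -> eps <= (N z).1 / (1 + `|(N z).2|).
Proof.
have [eps /andP[eps_gt0 _] Heps] : exists2 eps, 0 < eps <= 1 &
    forall z, (z != u) && (z != a) -> eps <= (N z).1 / (1 + `|(N z).2|).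
  apply: exists_pos_lbound => z /andP[zu za].
  by rewrite divr_gt0 ?normalized_x_gt0 ?(ltr_pwDl ltr01).
by exists eps => // z zu za; apply: Heps; rewrite zu za.
Qed.

Lemma squeezed_realization lam : 0 < lam <= 1 ->
  is_realization chi (squeeze lam \o N).
Proof.
move=> lam01; apply: (realization_rescale RN) => x y z _.
have den_gt0 w := squeeze_den_gt0 lam01 (normalized_y_le1 w).
exists (lam / (squeeze_den lam (N x) * squeeze_den lam (N y)
               * squeeze_den lam (N z))).
  by case/andP: lam01 => lam_gt0 _; rewrite divr_gt0 ?mulr_gt0.
exact: orient_squeeze (normalized_y_le1 _) (normalized_y_le1 _) (normalized_y_le1 _).
Qed.

Section Squeezed.
Variables d m : RR.
Hypotheses (d01 : 0 < d <= 1) (m01 : 0 < m <= 1) (Hm : squeeze_rate m).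

Let lam01 : 0 < d * m <= 1.
Proof.
case/andP: d01 => d_gt0 d_le1; case/andP: m01 => m_gt0 m_le1.
by rewrite mulr_gt0 // mulr_ile1 // ltW.
Qed.

Lemma squeezed_y_le z : z != u -> `|(squeeze (d * m) (N z)).2| <= d.
Proof.
case/andP: d01 => d_gt0 _; move=> zu.
apply: (squeeze_y_le lam01 (normalized_y_lt1 zu)).
by rewrite -mulrA ler_pM2l //; apply: Hm.1.
Qed.

Lemma squeezed_slope x y : x != u -> y != u -> x != y ->
  (squeeze (d * m) (N x)).1 != (squeeze (d * m) (N y)).1 /\
  `|((squeeze (d * m) (N y)).2 - (squeeze (d * m) (N x)).2)
    / ((squeeze (d * m) (N y)).1 - (squeeze (d * m) (N x)).1)| <= d.
Proof.
case/andP: d01 => d_gt0 d_le1; case/andP: m01 => m_gt0 _.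
move=> xu yu xy; have := Hm.2 x y xu yu xy.
set mu := `|_ * _ - _|; set dy := `|_ - _|; set o := `|_| => H.
have mu_ge0 : 0 <= mu by apply: normr_ge0.
have dy_ge0 : 0 <= dy by apply: normr_ge0.
apply: (squeeze_slope lam01 (normalized_y_le1 x) (normalized_y_le1 y) (ltW d_gt0)
  (normalized_general_position xu yu xy)); rewrite -/mu -/dy -/o.
  have : d * (m * mu) <= m * mu by rewrite ler_piMl // mulr_ge0 // ltW.
  nra.
rewrite mulrCA -mulrA ler_pM2l // (le_trans _ H) // ler_pM2l ?mulr_gt0 //.
by rewrite lerDr.
Qed.

Lemma squeezed_x_le1 z : z != u -> (squeeze (d * m) (N z)).1 <= 1.
Proof.
move=> zu; have [->|zb] := eqVneq z b; first by rewrite Nb squeeze_x_axis.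
have bu : b != u by case: Pb.
have [_ Hb] := (is_predE _ _ (squeezed_realization lam01)).1 Pb.
apply: x_le1_of_flat_slope.
  by have := Hb z zb zu; rewrite /= Nb Nu squeeze_x_axis squeeze_apex.
have bz : b != z by rewrite eq_sym.
have [_ slope] := squeezed_slope bu zu bz.
rewrite Nb squeeze_x_axis in slope; apply: le_trans slope _.
by case/andP: d01.
Qed.

Lemma squeezed_right_squeezing delta eps : d <= delta ->
  (forall z, z != u -> z != a -> eps <= (N z).1 / (1 + `|(N z).2|)) ->
  right_squeezing chi u delta eps (squeeze (d * m) \o N).
Proof.
move=> d_le Heps; split; first exact: squeezed_realization.
split; first by rewrite /= Nu squeeze_apex.
split; first by move=> y /(succ_unique RN Sa) ->; rewrite /= Na squeeze_x_axis.
split; first by move=> y /(pred_unique RN Pb) ->; rewrite /= Nb squeeze_x_axis.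
split=> [e eu not_succ | x y xu yu].
  have ea : e != a by apply: contra_not_neq not_succ => ->.
  split; last by rewrite -ler_norml (le_trans (squeezed_y_le eu)).
  rewrite squeezed_x_le1 // andbT (le_trans (Heps e eu ea)) //.
  exact: (squeeze_x_ge lam01 (normalized_y_le1 e) (ltW (normalized_x_gt0 eu ea))).
move/eqP=> Pxy; have xy : x != y by apply: contra_not_neq Pxy => ->.
by have [? ?] := squeezed_slope xu yu xy; split=> //; apply: le_trans d_le.
Qed.

End Squeezed.

End NormalizedRealization.

Theorem lemma2p6 (E : finType) (chi : E -> E -> E -> int) (u : E) :
  (3 <= #|E|)%N ->
  chirotope_axioms chi -> realizable chi -> extreme chi u ->
  exists eps : RR, 0 < eps /\
    forall delta : RR, 0 < delta ->
      exists P : E -> RR * RR, right_squeezing chi u delta eps P.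
Proof.
(* Realizability alone is used: the chirotope axioms are implied by it. *)
move=> E3 _ [p Rp] ext_u.
have [a [b [Sa Pb]]] := exists_hull_neighbours E3 Rp ext_u.
have [N [RN Nu Na Nb]] :=
  exists_normalized_realization Rp Sa Pb (succ_neq_pred E3 Rp Sa Pb).
have [m m01 Hm] := exists_squeeze_rate RN Sa Pb Nu Na Nb.
have [eps eps_gt0 Heps] := exists_squeeze_margin RN Sa Nu Na.
exists eps; split=> // delta delta_gt0.
have d01 : 0 < Order.min delta 1 <= 1.
  by rewrite lt_min delta_gt0 ltr01 ge_min lexx orbT.
exists (squeeze (Order.min delta 1 * m) \o N).
by apply: (squeezed_right_squeezing RN Sa Pb Nu Na Nb d01 m01 Hm); rewrite ?ge_min ?lexx.
Qed.
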